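(* Let $r\ge 3$ be an integer, let $\varphi$ be an instance of Exact $r$-SAT, and let $G(\varphi)$ be the graph constructed from $\varphi$ as described in the context. If $\varphi$ is satisfiable, then $\mathrm{wcol}_r(G(\varphi)) \leq 2r-1$.
   Context: Exact $r$-SAT: given a CNF formula $\varphi$ with clauses $c_1,\dots,c_m$ over variables $x_1,\dots,x_n$ such that each clause contains exactly $r$ different variables, decide whether $\varphi$ is satisfiable. An $\ell$-subdivided edge between $a$ and $b$ is an induced path with $\ell$ internal vertices (subdivision vertices) joining $a$ and $b$, whose internal vertices have no other neighbors. Construction of $G(\varphi)$: for each clause $c_i$ create $2r$ vertices $u_i^1,\dots,u_i^{2r}$. For each variable $x_j$ create two vertices $v_j,v'_j$ (for the literals $x_j$ and $\overline{x}_j$) joined by an edge. For each clause $c_i$ containing literal $x_j$, add two $(r-2)$-subdivided edges from $v_j$ to each of $u_i^1,\dots,u_i^{2r}$; for each clause $c_i$ containing $\overline{x}_j$, add two $(r-2)$-subdivided edges from $v'_j$ to each of $u_i^1,\dots,u_i^{2r}$. Weak coloring numbers: for a graph $G=(V,E)$ and a total order $\sigma$ of $V$, a vertex $v\neq u$ is weakly $r$-reachable from $u$ if $u <_\sigma v$ and there is a $u$–$v$ path $P$ of length at most $r$ all of whose vertices other than $u,v$ precede $v$ in $\sigma$; $\mathrm{wreach}_r(u,G_\sigma)$ is the set of such $v$, and $\mathrm{wcol}_r(G)=\min_\sigma\max_u|\mathrm{wreach}_r(u,G_\sigma)|$ over all total orders $\sigma$ of $V$. *)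

From mathcomp Require Import all_boot.
Set Implicit Arguments. Unset Strict Implicit. Unset Printing Implicit Defensive.

(* A literal over variables x_0..x_{n-1}: (j, true) is x_j, (j, false) is ~x_j. *)
Definition lit (n : nat) := ('I_n * bool)%type.

Definition cnf (m n : nat) := 'I_m -> seq (lit n).

Definition exact_r_cnf (r m n : nat) (phi : cnf m n) : Prop :=
  forall i : 'I_m, size (phi i) = r /\ uniq (map fst (phi i)).

Definition satisfiable (m n : nat) (phi : cnf m n) : Prop :=
  exists a : 'I_n -> bool, forall i : 'I_m, has (fun l : lit n => a l.1 == l.2) (phi i).

(* A total order sigma of V is given by an injective rank function o : V -> 'I_#|V|;
   u <_sigma v  iff  o u < o v. *)

Definition wreach (V : finType) (adj : rel V) (r : nat) (o : V -> nat) (u : V) : {set V} :=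
  [set v | (o u < o v) &&
     [exists k : 'I_r.+1, exists p : k.-tuple V,
        [&& path adj u p, last u p == v, uniq (u :: p) &
            all (fun w => (w == u) || (w == v) || (o w < o v)) p]]].

(* wcol_r(G) = min over total orders of max_u |wreach_r(u)|.  (The initial value #|V|
   of the min is never attained as minimum unless equal: the range of orders is nonempty
   and every |wreach| is < #|V|.) *)
Definition wcol (V : finType) (adj : rel V) (r : nat) : nat :=
  \big[minn/#|V|]_(o : {ffun V -> 'I_#|V|} | injectiveb o)
     \max_(u : V) #|wreach adj r (fun x => nat_of_ord (o x)) u|.

(* Vertices:
   inl (inl (i,k))          : clause vertex u_i^k   (k < 2r)
   inl (inr (j,b))          : literal vertex v_j (b = true) / v'_j (b = false)
   inr ((((i,p),k),t),s)    : s-th subdivision vertex (s < r-2) of copy t (of the two)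
                              of the subdivided edge between the vertex of the p-th
                              literal of clause i (p < r) and u_i^k. *)
Definition GV (r m n : nat) : finType :=
  ((('I_m * 'I_(2 * r)) + ('I_n * bool)) +
   ('I_m * 'I_r * 'I_(2 * r) * bool * 'I_(r - 2)))%type.

Definition clause_lit (m n : nat) (phi : cnf m n) (i : 'I_m) (p : nat) : option (lit n) :=
  nth None (map Some (phi i)) p.

Definition Garc (r m n : nat) (phi : cnf m n) (x y : GV r m n) : bool :=
  match x, y with
  | inl (inr (j, b)), inl (inr (j', b')) => (j == j') && b && ~~ b'
  | inr (i, p, k, t, s), inr (i', p', k', t', s') =>
      [&& i == i', p == p', k == k', t == t' & s.+1 == s' :> nat]
  | inr (i, p, k, t, s), inl (inr l) =>
      (s == 0 :> nat) && (clause_lit phi i p == Some l)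
  | inr (i, p, k, t, s), inl (inl (i', k')) =>
      [&& s.+1 == r - 2, i == i' & k == k']
  | _, _ => false
  end.

Definition Gadj (r m n : nat) (phi : cnf m n) : rel (GV r m n) :=
  fun x y => Garc phi x y || Garc phi y x.

Arguments Garc r {m n} phi x y.
Arguments Gadj r {m n} phi x y.

From mathcomp Require Import all_boot order zify.
Set Implicit Arguments. Unset Strict Implicit. Unset Printing Implicit Defensive.

(* Order the vertices of G(phi) by level: subdivision vertices first, then clause
   vertices, then the literal vertices that are false under a satisfying assignment,
   then the true ones.  Every vertex of a path witnessing that v is weakly reachable
   has level at most that of v.  So if v is a subdivision vertex the path stays on
   one subdivided edge, and if v = u_i^k it stays among u_i^k and its subdivided
   edges.  If v is a literal vertex, the truncated distance to v is 1-Lipschitz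
   along the path (in G minus the edges v_j v'_j when v is false, since true literal
   vertices are then excluded), so the start lies within distance r of v.
   Counting: u_i^k reaches at most its r literals and the complements of its false
   literals, at most r - 1 of them since c_i is satisfied; a subdivision vertex
   reaches at most the other r - 3 vertices of its edge, its clause vertex, the r
   literals of its clause and the complement of the literal its edge ends at; a
   literal vertex reaches at most its complement. *)


Section SymmetricPaths.
Variables (T : Type) (e : rel T) (R : pred T).
Let sym_e : rel T := fun x y => e x y || e y x.

Lemma path_lipschitz (f : T -> nat) :
  (forall x y, R x -> R y -> e x y -> f x <= (f y).+1 /\ f y <= (f x).+1) ->
  forall u p, R u -> all R p -> path sym_e u p -> f u <= f (last u p) + size p.
Proof.
move=> f_lip u p; elim: p u => [|y p IHp] u Ru /=; first by rewrite addn0.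
case/andP=> Ry Rp /andP[/orP e_uy yp]; have := IHp y Ry Rp yp.
by case: e_uy => [/(f_lip _ _ Ru Ry) | /(f_lip _ _ Ry Ru)] []; lia.
Qed.

Lemma path_invariant (U : Type) (g : T -> U) :
  (forall x y, R x -> R y -> e x y -> g x = g y) ->
  forall u p, R u -> all R p -> path sym_e u p -> g u = g (last u p).
Proof.
move=> g_inv u p; elim: p u => [|y p IHp] u Ru //=.
case/andP=> Ry Rp /andP[/orP e_uy yp]; rewrite -(IHp y Ry Rp yp).
by case: e_uy => [/(g_inv _ _ Ru Ry) | /(g_inv _ _ Ry Ru)].
Qed.

End SymmetricPaths.

Section WeakColoring.
Variables (V : finType) (adj : rel V) (r : nat).

Lemma wreach_path (o f : V -> nat) u v :
  (forall x y, o x < o y -> f x <= f y) -> v \in wreach adj r o u ->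
  u != v /\ exists2 p : seq V, [/\ path adj u p, last u p = v & size p <= r]
                              & all (fun w => f w <= f v) (u :: p).
Proof.
move=> o_f; rewrite inE => /andP[ouv /existsP[k /existsP[p]]].
case/and4P=> up /eqP pv _ p_before; split.
  by apply: contraTneq ouv => ->; rewrite ltnn.
exists (val p); first by rewrite size_tuple -ltnS ltn_ord.
rewrite /= o_f //; apply/allP=> w /(allP p_before).
by case/orP=> [/orP[] /eqP-> | /o_f] //; apply: o_f.
Qed.

Lemma exists_order_refining (f : V -> nat) :
  exists o : {ffun V -> 'I_#|V|}, injective o /\ forall x y, o x < o y -> f x <= f y.
Proof.
pose leT x y := f x <= f y; pose s := sort leT (enum V).
have s_V x : x \in s by rewrite mem_sort mem_enum.
have lt_index x : index x s < #|V| by rewrite cardE -(size_sort leT) index_mem.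
exists [ffun x => Ordinal (lt_index x)]; split=> [x y | x y]; rewrite !ffunE.
  by move/(congr1 val) => /=; apply: index_inj.
apply: (sorted_ltn_index (leT := leT)) (s_V x) (s_V y).
  by move=> ? ? ?; apply: leq_trans.
by apply: sort_sorted => x' y'; apply: leq_total.
Qed.

Lemma wcol_leq_refining (f : V -> nat) c :
  (forall o : V -> nat, (forall x y, o x < o y -> f x <= f y) ->
     forall u, #|wreach adj r o u| <= c) ->
  wcol adj r <= c.
Proof.
move=> bound; have [o [o_inj o_f]] := exists_order_refining f.
pose P (o : {ffun V -> 'I_#|V|}) := injectiveb o.
pose F (o : {ffun V -> 'I_#|V|}) := \max_u #|wreach adj r (fun x => nat_of_ord (o x)) u|.
have P_o : P o by apply/injectiveP.
have wcol_le_o : wcol adj r <= F o by have := Order.TotalTheory.bigmin_le_cond #|V| F P_o.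
by apply: leq_trans wcol_le_o _; apply/bigmax_leqP => u _; apply: bound.
Qed.

End WeakColoring.

Definition negl n (l : lit n) : lit n := (l.1, ~~ l.2).

Lemma neglK n : involutive (@negl n).
Proof. by case=> j b; rewrite /negl negbK. Qed.

Lemma clause_lit_mem m n (phi : cnf m n) i p l :
  clause_lit phi i p = Some l -> l \in phi i.
Proof.
rewrite /clause_lit; elim: (phi i) p => [|l' s IHs] [|p] //=; first by case=> ->; rewrite mem_head.
by move/IHs; rewrite in_cons orbC => ->.
Qed.

Section Gadgets.
Variables (r m n : nat) (phi : cnf m n) (a : 'I_n -> bool).
Hypothesis r_ge3 : 3 <= r.
Hypothesis phi_exact : exact_r_cnf r phi.
Hypothesis a_sat : forall i, has (fun l : lit n => a l.1 == l.2) (phi i).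
Local Notation V := (GV r m n).

Definition litv (l : lit n) : V := inl (inr l).
Definition clausev (i : 'I_m) (k : 'I_(2 * r)) : V := inl (inl (i, k)).

Definition is_litv (x : V) : bool := if x is inl (inr _) then true else false.

Definition level (x : V) : nat :=
  match x with
  | inr _ => 0
  | inl (inl _) => 1
  | inl (inr l) => if a l.1 == l.2 then 3 else 2
  end.

(* The distance from [litv lam] in G without the edges v_j v'_j, truncated at r + 1. *)
Definition lit_dist (lam : lit n) (x : V) : nat :=
  match x with
  | inl (inr l) => if l == lam then 0 else r.+1
  | inl (inl (i, _)) => if lam \in phi i then r - 1 else r.+1
  | inr (i, p, _, _, s) =>
      if clause_lit phi i p == Some lam then s.+1
      else if lam \in phi i then minn r.+1 (r - 1 + (r - 2 - s)) else r.+1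
  end.

(* The distance from [litv lam] in G, truncated at r + 1. *)
Definition true_lit_dist (lam : lit n) (x : V) : nat :=
  minn (lit_dist lam x) (lit_dist (negl lam) x).+1.

Lemma lit_dist_lipschitz lam x y : ~~ (is_litv x && is_litv y) -> Garc r phi x y ->
  lit_dist lam x <= (lit_dist lam y).+1 /\ lit_dist lam y <= (lit_dist lam x).+1.
Proof.
case: x => [[[i k]|[j b]]|[[[[i p] k] t] s]];
case: y => [[[i' k']|[j' b']]|[[[[i' p'] k'] t'] s']] //= _.
- case/and3P=> /eqP s_last /eqP <- _; have := ltn_ord s.
  case: eqP => [/clause_lit_mem -> | _]; first lia.
  by case: (lam \in phi i); lia.
- case/andP=> /eqP-> /eqP ->; rewrite eqE /=.
  case: eqP => _; first lia.
  by case: (lam \in phi i); lia.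
- case/and5P=> /eqP <- /eqP <- _ _ /eqP <-; have := ltn_ord s'.
  case: eqP => _; first lia.
  by case: (lam \in phi i); lia.
Qed.

Lemma true_lit_dist_lipschitz lam x y : Garc r phi x y ->
  true_lit_dist lam x <= (true_lit_dist lam y).+1 /\
  true_lit_dist lam y <= (true_lit_dist lam x).+1.
Proof.
move=> xy; rewrite /true_lit_dist; have [lits|nlits] := boolP (is_litv x && is_litv y).
  case: x y xy lits => [[[? ?]|[j b]]|?] [[[? ?]|[j' b']]|?] //=.
  case/andP=> /andP[/eqP <- ->] /negPf -> _.
  by case: lam => jl bl; rewrite /negl !xpair_eqE /=; case: (j == jl); case: bl.
have [] := lit_dist_lipschitz lam nlits xy.
have [] := lit_dist_lipschitz (negl lam) nlits xy.
lia.
Qed.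

Lemma arc_level_le2_not_lits x y : level x <= 2 -> level y <= 2 -> Garc r phi x y ->
  ~~ (is_litv x && is_litv y).
Proof.
case: x y => [[?|[j b]]|?] [[?|[j' b']]|?] //=.
case: (eqVneq j j') => [<-|_]; last by rewrite !andFb.
by case: b b' (a j) => [] [] [].
Qed.

Definition clause_gadget (x : V) : option ('I_m * 'I_(2 * r)) :=
  match x with
  | inl (inl ik) => Some ik
  | inr (i, _, k, _, _) => Some (i, k)
  | _ => None
  end.

Definition subdiv_copy (x : V) : option ('I_m * 'I_r * 'I_(2 * r) * bool) :=
  if x is inr (c, _) then Some c else None.

Lemma clause_gadget_arc x y : level x <= 1 -> level y <= 1 -> Garc r phi x y ->
  clause_gadget x = clause_gadget y.
Proof.
case: x => [[[i k]|[j b]]|[[[[i p] k] t] s]];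
case: y => [[[i' k']|[j' b']]|[[[[i' p'] k'] t'] s']] //=; try by case: (a _ == _).
- by move=> _ _ /and3P[_ /eqP <- /eqP <-].
- by move=> _ _ /and5P[/eqP <- _ /eqP <- _ _].
Qed.

Lemma subdiv_copy_arc x y : level x <= 0 -> level y <= 0 -> Garc r phi x y ->
  subdiv_copy x = subdiv_copy y.
Proof.
case: x => [[?|[j b]]|[[[[i p] k] t] s]];
case: y => [[?|[j' b']]|[[[[i' p'] k'] t'] s']] //=; try by case: (a _ == _).
by move=> _ _ /and5P[/eqP <- /eqP <- /eqP <- /eqP <- _].
Qed.

(* Contains wreach_r(u) for every order refining [level]. *)
Definition candidates (u : V) : seq V :=
  match u with
  | inl (inl (i, _)) =>
      [seq litv l | l <- phi i] ++ [seq litv (negl l) | l <- phi i & a l.1 != l.2]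
  | inl (inr l) => [:: litv (negl l)]
  | inr (i, p, k, t, _) =>
      [seq inr (i, p, k, t, s) | s <- enum 'I_(r - 2)] ++ clausev i k ::
      [seq litv l | l <- phi i] ++
      (if clause_lit phi i p is Some l then [:: litv (negl l)] else [::])
  end.

Lemma lit_dist_candidates lam u :
  lit_dist lam u <= r -> u != litv lam -> litv lam \in candidates u.
Proof.
case: u => [[[i k]|l]|[[[[i p] k] t] s]] /=.
- by case: ifP => [lam_i _ _|_]; [rewrite mem_cat map_f | lia].
- by case: eqP => [-> _|_]; [rewrite eqxx | lia].
- move=> + _; rewrite !(mem_cat, in_cons).
  case: eqP => [/clause_lit_mem lam_i _|_]; first by rewrite map_f ?orbT.
  by case: ifP => [lam_i _|_]; [rewrite map_f ?orbT | lia].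
Qed.

Lemma neg_lit_dist_candidates lam u :
  a lam.1 == lam.2 -> lit_dist (negl lam) u < r -> litv lam \in candidates u.
Proof.
move=> lam_true; case: u => [[[i k]|l]|[[[[i p] k] t] s]] /=.
- case: ifP => [nlam_i _|_]; last lia.
  rewrite mem_cat; apply/orP; right; apply/mapP; exists (negl lam); last by rewrite neglK.
  by rewrite mem_filter nlam_i (eqP lam_true) andbT /negl; case: (lam.2).
- by case: eqP => [-> _|_]; [rewrite neglK mem_head | lia].
- rewrite !(mem_cat, in_cons); case: eqP => [-> _|_]; first by rewrite neglK mem_head !orbT.
  by have := ltn_ord s; case: ifP; lia.
Qed.

Lemma size_candidates u : size (candidates u) <= 2 * r - 1 + (u \in candidates u).
Proof.
case: u => [[[i k]|l]|[[[[i p] k] t] s]] /=; last 2 first.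
- lia.
- have s_enum : s \in enum 'I_(r - 2) by rewrite mem_enum.
  rewrite mem_cat (map_f _ s_enum) size_cat size_map size_enum_ord /= size_cat size_map.
  have [-> _] := phi_exact i; case: clause_lit => [?|] /=; lia.
have [size_i _] := phi_exact i; rewrite size_cat !size_map size_filter.
have := a_sat i; rewrite has_count.
have := count_predC (fun l : lit n => a l.1 == l.2) (phi i).
have -> : count (predC (fun l : lit n => a l.1 == l.2)) (phi i)
        = count (fun l : lit n => a l.1 != l.2) (phi i) by [].
lia.
Qed.

Lemma reach_clause_vertex u p i k :
  path (Gadj r phi) u p -> last u p = clausev i k ->
  all (fun w => level w <= 1) (u :: p) -> u != clausev i k -> clausev i k \in candidates u.
Proof.
move=> up pv /andP[u1 p1]; have := path_invariant clause_gadget_arc u1 p1 up.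
rewrite pv; case: u {u1 up pv} => [[[i' k']|?]|[[[[i' p'] k'] t] s]] //=.
- by case=> -> ->; rewrite eqxx.
- by case=> -> -> _; rewrite mem_cat in_cons eqxx orbT.
Qed.

Lemma reach_subdiv_vertex u p c s :
  path (Gadj r phi) u p -> last u p = inr (c, s) ->
  all (fun w => level w <= 0) (u :: p) -> inr (c, s) \in candidates u.
Proof.
move=> up pv /andP[u0 p0]; have := path_invariant subdiv_copy_arc u0 p0 up.
rewrite pv; case: u {u0 up pv} => [[? | ?] | [[[[i p'] k] t] s']] //= [<-].
have s_enum : s \in enum 'I_(r - 2) by rewrite mem_enum.
by rewrite mem_cat (map_f _ s_enum).
Qed.

Lemma reach_false_lit u p lam :
  path (Gadj r phi) u p -> last u p = litv lam -> size p <= r ->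
  all (fun w => level w <= 2) (u :: p) -> u != litv lam -> litv lam \in candidates u.
Proof.
move=> up pv size_p /andP[u2 p2] u_lam; apply: lit_dist_candidates u_lam.
have lip x y (x2 : level x <= 2) (y2 : level y <= 2) (xy : Garc r phi x y) :=
  lit_dist_lipschitz lam (arc_level_le2_not_lits x2 y2 xy) xy.
have := path_lipschitz lip u2 p2 up; rewrite pv /= eqxx add0n => /leq_trans; exact.
Qed.

Lemma reach_true_lit u p lam :
  path (Gadj r phi) u p -> last u p = litv lam -> size p <= r ->
  a lam.1 == lam.2 -> u != litv lam -> litv lam \in candidates u.
Proof.
move=> up pv size_p lam_true u_lam.
have lip x y (_ : predT x) (_ : predT y) := true_lit_dist_lipschitz lam (x := x) (y := y).
have := path_lipschitz lip erefl (all_predT p) up.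
rewrite pv /true_lit_dist /= eqxx min0n add0n => /leq_trans/(_ size_p) dist.
have [near | near_neg] : lit_dist lam u <= r \/ lit_dist (negl lam) u < r by lia.
- exact: lit_dist_candidates.
- exact: neg_lit_dist_candidates.
Qed.

Lemma wreach_candidates (o : V -> nat) u v :
  (forall x y, o x < o y -> level x <= level y) ->
  v \in wreach (Gadj r phi) r o u -> v \in candidates u.
Proof.
move=> o_level /(wreach_path o_level) [uv [p [up pv size_p] levels]].
case: v pv uv levels => [[[i k] | lam] | [c s]] pv uv levels.
- exact: reach_clause_vertex up pv levels uv.
- have [lam_true | lam_false] := boolP (a lam.1 == lam.2).
    exact: reach_true_lit up pv size_p lam_true uv.
  by apply: reach_false_lit up pv size_p _ uv; rewrite /level (negbTE lam_false) in levels.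
- exact: reach_subdiv_vertex up pv levels.
Qed.

Lemma card_wreach (o : V -> nat) u :
  (forall x y, o x < o y -> level x <= level y) ->
  #|wreach (Gadj r phi) r o u| <= 2 * r - 1.
Proof.
move=> o_level.
have sub : wreach (Gadj r phi) r o u \subset [predD1 candidates u & u].
  apply/subsetP => v v_reach; rewrite inE (wreach_candidates o_level v_reach) andbT.
  by have [] := wreach_path o_level v_reach; rewrite eq_sym.
apply: leq_trans (subset_leq_card sub) _.
rewrite -(leq_add2l (u \in candidates u)) -cardD1 addnC.
exact: leq_trans (card_size _) (size_candidates u).
Qed.

End Gadgets.

Theorem lemma3p8 (r m n : nat) (phi : cnf m n) :
  3 <= r -> exact_r_cnf r phi -> satisfiable phi ->
  wcol (Gadj r phi) r <= 2 * r - 1.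
Proof.
move=> r_ge3 phi_exact [a a_sat].
apply: (wcol_leq_refining (f := level a)) => o o_level u.
exact: card_wreach.
Qed.
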